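(* Let $\mathbb{R}^3$ carry the Euclidean dot product $\cdot$, cross product $\times$ and norm $|\cdot|$. For $\mathbf r\neq \mathbf 0$ and $\mathbf u,\mathbf w\in\mathbb{R}^3$ define $$\mathbf f(\mathbf r,\mathbf u,\mathbf w)\triangleq\Big(\mathbf w\cdot\tfrac{\mathbf r}{|\mathbf r|}\Big)\mathbf u+\Big(\mathbf u\cdot\tfrac{\mathbf r}{|\mathbf r|}\Big)\mathbf w+\Big[(\mathbf u\cdot\mathbf w)-5\Big(\mathbf u\cdot\tfrac{\mathbf r}{|\mathbf r|}\Big)\Big(\mathbf w\cdot\tfrac{\mathbf r}{|\mathbf r|}\Big)\Big]\tfrac{\mathbf r}{|\mathbf r|}.$$ For $\mathbf r\neq\mathbf 0$ and $\mathbf f^*\in\mathbb{R}^3$ define $$\Phi_1(\mathbf r,\mathbf f^* )\triangleq\sqrt{|\mathbf r\times\mathbf f^*|^2+|\mathbf r|^2|\mathbf f^*|^2},\qquad \Phi_2(\mathbf r,\mathbf f^* )\triangleq\big(2-\operatorname{sgn}(\mathbf r\cdot\mathbf f^* )^2\big)\Phi_1(\mathbf r,\mathbf f^* ),$$ $$g_{\mathrm r}\triangleq-\frac{\operatorname{sgn}(\mathbf r\cdot\mathbf f^* )}{2}\Big(\frac{|\mathbf r\cdot\mathbf f^*|+\Phi_1}{|\mathbf r|}\Big)^{1/2},\qquad g_{\mathrm{rf}}\triangleq\frac{1}{\sqrt2}\Big(\frac{-|\mathbf r\cdot\mathbf f^*|+\Phi_2}{|\mathbf r|}\Big)^{1/2},$$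 $$h_{\mathrm r}\triangleq\frac12\Big(\frac{|\mathbf r\cdot\mathbf f^*|+\Phi_2}{|\mathbf r|}\Big)^{1/2},\qquad h_{\mathrm{rf}}\triangleq-\frac{\operatorname{sgn}(\mathbf r\cdot\mathbf f^* )}{\sqrt2}\Big(\frac{-|\mathbf r\cdot\mathbf f^*|+\Phi_1}{|\mathbf r|}\Big)^{1/2},$$ where all of these are evaluated at $(\mathbf r,\mathbf f^* )$. Define $$\mathbf g(\mathbf r,\mathbf f^* )\triangleq\begin{cases}\frac{g_{\mathrm r}}{|\mathbf r|}\mathbf r+\frac{g_{\mathrm{rf}}}{|\mathbf r||\mathbf r\times\mathbf f^*|}\big((\mathbf r\times\mathbf f^* )\times\mathbf r\big), & \mathbf r\times\mathbf f^*\neq\mathbf 0,\\ \frac{g_{\mathrm r}}{|\mathbf r|}\mathbf r, & \mathbf r\times\mathbf f^*=\mathbf 0,\end{cases}$$ $$\mathbf h(\mathbf r,\mathbf f^* )\triangleq\begin{cases}\frac{h_{\mathrm r}}{|\mathbf r|}\mathbf r+\frac{h_{\mathrm{rf}}}{|\mathbf r||\mathbf r\times\mathbf f^*|}\big((\mathbf r\times\mathbf f^* )\times\mathbf r\big), & \mathbf r\times\mathbf f^*\neq\mathbf 0,\\ \frac{h_{\mathrm r}}{|\mathbf r|}\mathbf r, & \mathbf r\times\mathbf f^*=\mathbf 0.\end{cases}$$ Then for all $\mathbf f^*\in\mathbb{R}^3$ and all $\mathbf r\in\mathbb{R}^3$ with $\mathbf r\neq\mathbf 0$, $$\mathbf f\big(\mathbf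 r,\mathbf g(\mathbf r,\mathbf f^* ),\mathbf h(\mathbf r,\mathbf f^* )\big)=\mathbf f^*.$$
   Context: $\operatorname{sgn}$ denotes the sign function with $\operatorname{sgn}(x)=1$ for $x>0$, $\operatorname{sgn}(x)=-1$ for $x<0$, and $\operatorname{sgn}(0)=0$; square roots are nonnegative real square roots. The function $\mathbf f$ is (up to a positive factor) the magnetic dipole–dipole force exerted on a dipole of moment $\mathbf u$ at relative position $\mathbf r$ by a dipole of moment $\mathbf w$; $\mathbf g,\mathbf h$ give a pair of dipole amplitudes producing a prescribed force value $\mathbf f^*$. *)

(* vectors of R^3 are row vectors 'rV[R]_3 over a real closed field R
   (we need square roots: Num.sqrt). sgn is Num.sg. *)
From HB Require Import structures.
From mathcomp Require Import all_boot all_order all_algebra.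
Set Implicit Arguments. Unset Strict Implicit. Unset Printing Implicit Defensive.
Import Order.TTheory GRing.Theory Num.Theory.
Local Open Scope ring_scope.

Section Dipole.
Variable R : rcfType.
Local Notation vec := 'rV[R]_3.

Definition c0 (u : vec) : R := u 0 0.
Definition c1 (u : vec) : R := u 0 1.
Definition c2 (u : vec) : R := u 0 2%:R.

Definition mkv (a b c : R) : vec := \row_(i < 3) [:: a; b; c]`_i.

Definition dot (u v : vec) : R := \sum_(i < 3) u 0 i * v 0 i.
Definition vnorm (u : vec) : R := Num.sqrt (dot u u).
Definition cross (u v : vec) : vec :=
  mkv (c1 u * c2 v - c2 u * c1 v)
      (c2 u * c0 v - c0 u * c2 v)
      (c0 u * c1 v - c1 u * c0 v).

Definition dforce (r u w : vec) : vec :=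
  let rh := (vnorm r)^-1 *: r in
  (dot w rh) *: u + (dot u rh) *: w + (dot u w - 5 * dot u rh * dot w rh) *: rh.

Definition Phi1 (r fs : vec) : R :=
  Num.sqrt (vnorm (cross r fs) ^+ 2 + vnorm r ^+ 2 * vnorm fs ^+ 2).
Definition Phi2 (r fs : vec) : R :=
  (2 - Num.sg (dot r fs) ^+ 2) * Phi1 r fs.

Definition g_r (r fs : vec) : R :=
  - (Num.sg (dot r fs) / 2) *
    Num.sqrt ((`|dot r fs| + Phi1 r fs) / vnorm r).
Definition g_rf (r fs : vec) : R :=
  (Num.sqrt 2)^-1 * Num.sqrt ((- `|dot r fs| + Phi2 r fs) / vnorm r).
Definition h_r (r fs : vec) : R :=
  2^-1 * Num.sqrt ((`|dot r fs| + Phi2 r fs) / vnorm r).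
Definition h_rf (r fs : vec) : R :=
  - (Num.sg (dot r fs) / Num.sqrt 2) *
    Num.sqrt ((- `|dot r fs| + Phi1 r fs) / vnorm r).

Definition gvec (r fs : vec) : vec :=
  if cross r fs != 0 then
    (g_r r fs / vnorm r) *: r +
    (g_rf r fs / (vnorm r * vnorm (cross r fs))) *: cross (cross r fs) r
  else (g_r r fs / vnorm r) *: r.

Definition hvec (r fs : vec) : vec :=
  if cross r fs != 0 then
    (h_r r fs / vnorm r) *: r +
    (h_rf r fs / (vnorm r * vnorm (cross r fs))) *: cross (cross r fs) r
  else (h_r r fs / vnorm r) *: r.

End Dipole.

(* In the orthonormal frame rhat = r/|r|, ehat = ((r x fs) x r)/(|r| |r x fs|) the force is
   diagonal: f(r, a rhat + b ehat, a' rhat + b' ehat) = (b b' - 2 a a') rhat + (a b' + a' b) ehat,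
   while fs = (r.fs/|r|) rhat + (|r x fs|/|r|) ehat.  Since g and h have coordinates (g_r, g_rf)
   and (h_r, h_rf), everything reduces to two scalar equations.  By Lagrange's identity
   Phi1^2 = 2 |r x fs|^2 + (r.fs)^2, so the two square roots sqrt((Phi1 +- |r.fs|)/|r|) have
   product sqrt 2 |r x fs|/|r| and squares differing by 2 |r.fs|/|r|, which is exactly what the
   equations ask for; when r.fs = 0 the sign factors vanish and Phi2 = 2 Phi1 takes over. *)

From mathcomp Require Import all_boot all_order all_algebra.
From mathcomp Require Import ring lra.
Import Order.TTheory GRing.Theory Num.Theory.
Local Open Scope ring_scope.

Section Frame.
Set Implicit Arguments. Unset Strict Implicit.
Variable R : rcfType.
Implicit Types (u v w r e f : 'rV[R]_3) (a b : R).

Lemma dotE u v : dot u v = u 0 0 * v 0 0 + u 0 1 * v 0 1 + u 0 2%:R * v 0 2%:R.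
Proof.
rewrite /dot !big_ord_recr big_ord0 /= add0r.
by congr (_ + _ + _); congr (_ * _); congr (_ _ _); apply: val_inj.
Qed.

Lemma row3P u v : u 0 0 = v 0 0 -> u 0 1 = v 0 1 -> u 0 2%:R = v 0 2%:R -> u = v.
Proof.
move=> e0 e1 e2; apply/rowP => -[[|[|[|k]]] lt_k3] //.
- by rewrite (_ : Ordinal lt_k3 = 0) //; apply: val_inj.
- by rewrite (_ : Ordinal lt_k3 = 1) //; apply: val_inj.
- by rewrite (_ : Ordinal lt_k3 = 2%:R) //; apply: val_inj.
Qed.

Lemma mkvE (a b c : R) i : mkv a b c 0 i = [:: a; b; c]`_i.
Proof. by rewrite mxE. Qed.

Lemma dotC u v : dot u v = dot v u.
Proof. by rewrite !dotE; ring. Qed.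

Lemma dotDl u v w : dot (u + v) w = dot u w + dot v w.
Proof. by rewrite !dotE !mxE; ring. Qed.

Lemma dotDr u v w : dot u (v + w) = dot u v + dot u w.
Proof. by rewrite !dotE !mxE; ring. Qed.

Lemma dotZl a u v : dot (a *: u) v = a * dot u v.
Proof. by rewrite !dotE !mxE; ring. Qed.

Lemma dotZr a u v : dot u (a *: v) = a * dot u v.
Proof. by rewrite !dotE !mxE; ring. Qed.

Lemma dot0l u : dot 0 u = 0.
Proof. by rewrite -(scale0r 0) dotZl mul0r. Qed.

Lemma dot_ge0 u : 0 <= dot u u.
Proof. by rewrite dotE -!expr2; apply: addr_ge0; [apply: addr_ge0|]; apply: sqr_ge0. Qed.

Lemma dot_eq0 u : (dot u u == 0) = (u == 0).
Proof.
apply/eqP/eqP => [|->]; last exact: dot0l.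
rewrite dotE => sum_sq0.
apply: row3P; rewrite mxE; apply/eqP; rewrite -sqrf_eq0 expr2; apply/eqP; nra.
Qed.

Lemma dot_gt0 u : (0 < dot u u) = (u != 0).
Proof. by rewrite lt_def dot_eq0 dot_ge0 andbT. Qed.

Lemma sqr_vnorm u : vnorm u ^+ 2 = dot u u.
Proof. by rewrite sqr_sqrtr // dot_ge0. Qed.

Lemma vnorm_gt0 u : (0 < vnorm u) = (u != 0).
Proof. by rewrite sqrtr_gt0 dot_gt0. Qed.

Lemma cross0l v : cross 0 v = 0.
Proof. by apply: row3P; rewrite /cross /c0 /c1 /c2 !mkvE !mxE /=; ring. Qed.

Lemma cross_crossl r f : cross (cross r f) r = dot r r *: f - dot r f *: r.
Proof. by apply: row3P; rewrite /cross /c0 /c1 /c2 !mkvE !mxE !dotE /=; ring. Qed.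

Lemma dot_cross r f : dot (cross r f) (cross r f) = dot r r * dot f f - dot r f ^+ 2.
Proof. by rewrite /cross /c0 /c1 /c2 !dotE !mkvE /=; ring. Qed.

Definition rhat r : 'rV[R]_3 := (vnorm r)^-1 *: r.

(* Equal to 0 when r x f = 0, because then both the vector and the scalar (0^-1 = 0) vanish. *)
Definition ehat r f : 'rV[R]_3 :=
  (vnorm r * vnorm (cross r f))^-1 *: cross (cross r f) r.

Lemma dot_cross_crossl r f :
  dot (cross (cross r f) r) (cross (cross r f) r) = dot (cross r f) (cross r f) * dot r r.
Proof. by rewrite cross_crossl dot_cross !dotE !mxE; ring. Qed.

Lemma dot_rhat r : r != 0 -> dot (rhat r) (rhat r) = 1.
Proof.
move=> r0; rewrite /rhat dotZl dotZr -sqr_vnorm.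
by field; rewrite gt_eqF // vnorm_gt0.
Qed.

Lemma dot_ehatr r f : dot r (ehat r f) = 0.
Proof. by rewrite /ehat dotZr cross_crossl !dotE !mxE; ring. Qed.

Lemma ehat_cross0 r f : cross r f = 0 -> ehat r f = 0.
Proof. by rewrite /ehat => ->; rewrite cross0l scaler0. Qed.

Lemma dot_ehat r f : r != 0 -> cross r f != 0 -> dot (ehat r f) (ehat r f) = 1.
Proof.
move=> r0 c0; rewrite /ehat dotZl dotZr dot_cross_crossl -!sqr_vnorm.
by field; rewrite !gt_eqF ?vnorm_gt0.
Qed.

Lemma frame_decomposition r f : r != 0 ->
  f = (dot r f / vnorm r) *: rhat r + (vnorm (cross r f) / vnorm r) *: ehat r f.
Proof.
move=> r0; have n_neq0 : vnorm r != 0 by rewrite gt_eqF ?vnorm_gt0.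
have -> : (vnorm (cross r f) / vnorm r) *: ehat r f =
          (vnorm r ^+ 2)^-1 *: cross (cross r f) r.
  have [c0 | c0] := eqVneq (cross r f) 0; first by rewrite ehat_cross0 // c0 cross0l !scaler0.
  by rewrite /ehat scalerA; congr (_ *: _); field; rewrite n_neq0 gt_eqF ?vnorm_gt0.
rewrite /rhat cross_crossl -sqr_vnorm.
move: n_neq0; move: (vnorm r) => n n_neq0.
by apply: row3P; rewrite !mxE; field.
Qed.

Lemma dforce_frame r e a b a' b' : r != 0 -> dot r e = 0 ->
  dforce r (a *: rhat r + b *: e) (a' *: rhat r + b' *: e) =
  (b * b' * dot e e - 2 * a * a') *: rhat r + (a * b' + a' * b) *: e.
Proof.
move=> r0 re0.
have er0 : dot e (rhat r) = 0 by rewrite /rhat dotZr dotC re0 mulr0.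
rewrite /dforce -/(rhat r) /=.
move: (rhat r) (dot_rhat r0) er0 => rh rr er0.
rewrite !(dotDl, dotDr, dotZl, dotZr) rr er0 (dotC rh e) er0.
by apply: row3P; rewrite !mxE; ring.
Qed.

Lemma frame_combination r f a b :
  (if cross r f != 0 then
     (a / vnorm r) *: r + (b / (vnorm r * vnorm (cross r f))) *: cross (cross r f) r
   else (a / vnorm r) *: r) = a *: rhat r + b *: ehat r f.
Proof.
rewrite /rhat /ehat !scalerA; case: ifPn => // /negPn/eqP c0.
by rewrite c0 cross0l !scaler0 addr0.
Qed.

Lemma gvecE r f : gvec r f = g_r r f *: rhat r + g_rf r f *: ehat r f.
Proof. exact: frame_combination. Qed.

Lemma hvecE r f : hvec r f = h_r r f *: rhat r + h_rf r f *: ehat r f.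
Proof. exact: frame_combination. Qed.

End Frame.

Section Amplitudes.
Set Implicit Arguments. Unset Strict Implicit.
Variables (R : rcfType) (d s P n : R).
Hypotheses (s_ge0 : 0 <= s) (P_ge0 : 0 <= P) (n_gt0 : 0 < n).
Hypothesis sqr_P : P ^+ 2 = 2 * s ^+ 2 + d ^+ 2.

(* With d = r.fs, s = |r x fs|, P = Phi1 and n = |r|, gr, grf, hr, hrf are g_r, g_rf, h_r, h_rf. *)

Local Notation X := (Num.sqrt ((`|d| + P) / n)).
Local Notation Y := (Num.sqrt ((- `|d| + P) / n)).
Local Notation P2 := ((2 - Num.sg d ^+ 2) * P).
Local Notation gr := (- (Num.sg d / 2) * X).
Local Notation grf := ((Num.sqrt 2)^-1 * Num.sqrt ((- `|d| + P2) / n)).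
Local Notation hr := (2^-1 * Num.sqrt ((`|d| + P2) / n)).
Local Notation hrf := (- (Num.sg d / Num.sqrt 2) * Y).

Let n_neq0 : n != 0. Proof. by rewrite gt_eqF. Qed.
Let sqrt2_neq0 : Num.sqrt (2 : R) != 0. Proof. by rewrite gt_eqF ?sqrtr_gt0. Qed.
Let sqr_sqrt2 : Num.sqrt (2 : R) ^+ 2 = 2. Proof. by rewrite sqr_sqrtr. Qed.

Let normr_le_P : `|d| <= P.
Proof. rewrite -sqrtr_sqr -[P]ger0_norm // -sqrtr_sqr ler_sqrt ?sqr_ge0 // sqr_P; nra. Qed.

Let sqr_sqrt_divr x : 0 <= x -> Num.sqrt (x / n) ^+ 2 = x / n.
Proof. by move=> x_ge0; rewrite sqr_sqrtr // divr_ge0 // ltW. Qed.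

Let sqr_X : X ^+ 2 = (`|d| + P) / n.
Proof. by rewrite sqr_sqrt_divr // addr_ge0. Qed.

Let sqr_Y : Y ^+ 2 = (- `|d| + P) / n.
Proof. by rewrite sqr_sqrt_divr // addrC subr_ge0 normr_le_P. Qed.

Let mul_XY : X * Y = Num.sqrt 2 * s / n.
Proof.
rewrite -sqrtrM; last by rewrite divr_ge0 ?addr_ge0 // ltW.
have -> : (`|d| + P) / n * ((- `|d| + P) / n) = (Num.sqrt 2 * s / n) ^+ 2.
  rewrite !exprMn exprVn sqr_sqrt2.
  have -> : (`|d| + P) / n * ((- `|d| + P) / n) = (P ^+ 2 - `|d| ^+ 2) / n ^+ 2 by field.
  by rewrite sqr_P real_normK ?num_real; field.
by rewrite sqrtr_sqr ger0_norm // divr_ge0 ?mulr_ge0 ?sqrtr_ge0 // ltW.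
Qed.

Lemma amplitude_radial : grf * hrf - 2 * gr * hr = d / n.
Proof.
have [->|d_neq0] := eqVneq d 0; first by rewrite sgr0 !(mul0r, oppr0, mulr0, subrr).
have sg2 : Num.sg d ^+ 2 = 1 by rewrite sqr_sg d_neq0.
rewrite sg2 [(2 - 1) * P](_ : _ = P); last by ring.
have -> : (Num.sqrt 2)^-1 * Y * hrf - 2 * gr * (2^-1 * X) =
          Num.sg d * (X ^+ 2 / 2 - Y ^+ 2 / Num.sqrt 2 ^+ 2) by field.
by rewrite sqr_sqrt2 sqr_X sqr_Y -[in RHS](mulr_sg_norm d); field.
Qed.

Lemma amplitude_transverse : gr * hrf + hr * grf = s / n.
Proof.
have [d0|d_neq0] := eqVneq d 0.
  have P_eq : P = Num.sqrt 2 * s.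
    apply/eqP; rewrite -(eqrXn2 (_ : 0 < 2)%N) ?mulr_ge0 ?sqrtr_ge0 //.
    by rewrite sqr_P d0 exprMn sqr_sqrt2; apply/eqP; ring.
  rewrite d0 sgr0 normr0 expr0n /= !(mul0r, oppr0, add0r, subr0, addr0).
  have sqr_Z : Num.sqrt (2 * P / n) ^+ 2 = 2 * P / n by rewrite sqr_sqrt_divr ?mulr_ge0.
  have -> : 2^-1 * Num.sqrt (2 * P / n) * ((Num.sqrt 2)^-1 * Num.sqrt (2 * P / n)) =
            Num.sqrt (2 * P / n) ^+ 2 / (2 * Num.sqrt 2) by field.
  by rewrite sqr_Z P_eq; field; rewrite n_neq0 sqrt2_neq0.
have sg2 : Num.sg d ^+ 2 = 1 by rewrite sqr_sg d_neq0.
rewrite sg2 [(2 - 1) * P](_ : _ = P); last by ring.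
have -> : gr * hrf + 2^-1 * X * ((Num.sqrt 2)^-1 * Y) =
          (Num.sg d ^+ 2 + 1) * (X * Y) / (2 * Num.sqrt 2) by field.
by rewrite sg2 mul_XY; field; rewrite n_neq0 sqrt2_neq0.
Qed.

Lemma amplitude_hrf_eq0 : s = 0 -> hrf = 0.
Proof.
move=> s0; have P_eq : P = `|d|.
  by rewrite -[P]ger0_norm // -!sqrtr_sqr sqr_P s0; congr Num.sqrt; ring.
by rewrite P_eq addNr mul0r sqrtr0 mulr0.
Qed.

End Amplitudes.

Theorem proposition2 (R : rcfType) (r fs : 'rV[R]_3) :
  r != 0 -> dforce r (gvec r fs) (hvec r fs) = fs.
Proof.
move=> r0.
have n_gt0 : 0 < vnorm r by rewrite vnorm_gt0.
have s_ge0 : 0 <= vnorm (cross r fs) := sqrtr_ge0 _.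
have P_ge0 : 0 <= Phi1 r fs := sqrtr_ge0 _.
have sqr_Phi1 : Phi1 r fs ^+ 2 = 2 * vnorm (cross r fs) ^+ 2 + dot r fs ^+ 2.
  rewrite /Phi1 sqr_sqrtr; last by rewrite addr_ge0 ?sqr_ge0 // mulr_ge0 ?sqr_ge0.
  by rewrite !sqr_vnorm dot_cross; ring.
have radial : g_rf r fs * h_rf r fs - 2 * g_r r fs * h_r r fs = dot r fs / vnorm r :=
  amplitude_radial P_ge0 n_gt0 sqr_Phi1.
have transverse : g_r r fs * h_rf r fs + h_r r fs * g_rf r fs = vnorm (cross r fs) / vnorm r :=
  amplitude_transverse s_ge0 P_ge0 n_gt0 sqr_Phi1.
have h_rf_ehat : h_rf r fs * dot (ehat r fs) (ehat r fs) = h_rf r fs.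
  have [c0 | c0] := eqVneq (cross r fs) 0; last by rewrite dot_ehat ?mulr1.
  by rewrite /h_rf (amplitude_hrf_eq0 (vnorm r) P_ge0 sqr_Phi1) ?mul0r // c0 /vnorm dot0l sqrtr0.
rewrite gvecE hvecE dforce_frame ?dot_ehatr // [RHS](frame_decomposition fs r0).
by rewrite -mulrA h_rf_ehat radial transverse.
Qed.
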